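(* Let $G_1=(T_1,A_1)$ and $G_2=(T_2,A_2)$ be games such that $T_1,T_2,A_1,A_2$ are at most countable and both $G_1$ and $G_2$ are injective in $\mathbf{Games}_{emb}$ with respect to embeddings between finite games. If $G=(T,A)\le G_1$ is a finite game and $f\colon G\to G_2$ is a game embedding, then $f$ extends to an isomorphism $\tilde f\colon G_1\to G_2$, i.e. a bijective chronological map $\tilde f\colon T_1\to T_2$ with $\tilde f|_T=f$ and $\overline{\tilde f}(R)\in A_2\iff R\in A_1$ for all $R\in\mathrm{Run}(T_1)$.
   Context: A game tree is $T\subseteq M^{<\omega}$ (some set $M$) closed under initial segments such that every $t\in T$ has an extension $t^\frown x\in T$; $|t|$ is the length and $t\restriction k$ the initial segment of length $k$. $\mathrm{Run}(T)=\{R\in M^\omega:R\restriction n\in T\ \forall n\}$. A game is $(T,A)$ with $A\subseteq\mathrm{Run}(T)$; it is finite if $\mathrm{Run}(T)$ is finite. $(T,A)\le(T',A')$ means $T\subseteq T'$ and $A=A'\cap\mathrm{Run}(T)$. A chronological map $f\colon T_1\to T_2$ satisfies $|f(t)|=|t|$, $f(t\restriction k)=f(t)\restriction k$, and induces $\bar f$ on runs by $\bar f(R)\restriction n=f(R\restriction n)$. A game embedding $(T_1,A_1)\to(T_2,A_2)$ is an injective chronological $f$ with $\bar f(R)\in A_2\iff R\in A_1$ for all runs $R$. $\mathbf{Games}_{emb}$ is the category of games with game embeddings. A game $X$ is injective in $\mathbf{Games}_{emb}$ with respect to embeddings between finite games if for all finite games $C,D$, every game embedding $g\colon C\to D$ and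 every game embedding $f\colon C\to X$ there is a game embedding $h\colon D\to X$ with $h\circ g=f$. *)

From mathcomp Require Import all_boot.
Set Implicit Arguments.
Unset Strict Implicit.
Unset Printing Implicit Defensive.

(* Finite sequences M^{<omega} are [seq M]; t|k is [take k t];
   the initial segment of length n of a run R : nat -> M is [mkseq R n]. *)

Definition game_tree (M : Type) (T : seq M -> Prop) : Prop :=
  T [::] /\
  (forall t k, T t -> T (take k t)) /\
  (forall t, T t -> exists x, T (rcons t x)).

Definition Run (M : Type) (T : seq M -> Prop) (R : nat -> M) : Prop :=
  forall n, T (mkseq R n).

Definition game (M : Type) (T : seq M -> Prop) (A : (nat -> M) -> Prop) : Prop :=
  game_tree T /\ (forall R, A R -> Run T R).

Definition finite_game (M : Type) (T : seq M -> Prop) : Prop :=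
  exists (n : nat) (e : 'I_n -> nat -> M), forall R, Run T R -> exists i, R =1 e i.

Definition game_le (M : Type) (T : seq M -> Prop) (A : (nat -> M) -> Prop)
  (T' : seq M -> Prop) (A' : (nat -> M) -> Prop) : Prop :=
  (forall t, T t -> T' t) /\ (forall R, A R <-> (A' R /\ Run T R)).

(* Chronological map f : T1 -> T2 (f is a function on sequences whose values
   matter only on T1). *)
Definition chronological (M1 M2 : Type) (f : seq M1 -> seq M2)
  (T1 : seq M1 -> Prop) (T2 : seq M2 -> Prop) : Prop :=
  forall t, T1 t ->
    [/\ T2 (f t), size (f t) = size t & forall k, f (take k t) = take k (f t)].

Definition induced (M1 M2 : Type) (f : seq M1 -> seq M2)
  (R : nat -> M1) (R' : nat -> M2) : Prop :=
  forall n, mkseq R' n = f (mkseq R n).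

Definition game_embedding (M1 M2 : Type) (f : seq M1 -> seq M2)
  (T1 : seq M1 -> Prop) (A1 : (nat -> M1) -> Prop)
  (T2 : seq M2 -> Prop) (A2 : (nat -> M2) -> Prop) : Prop :=
  [/\ chronological f T1 T2,
      (forall s t, T1 s -> T1 t -> f s = f t -> s = t) &
      (forall R R', Run T1 R -> induced f R R' -> (A2 R' <-> A1 R))].

Definition injective_finite (MX : Type) (TX : seq MX -> Prop)
  (AX : (nat -> MX) -> Prop) : Prop :=
  forall (MC MD : Type) (TC : seq MC -> Prop) (AC : (nat -> MC) -> Prop)
         (TD : seq MD -> Prop) (AD : (nat -> MD) -> Prop)
         (g : seq MC -> seq MD) (f : seq MC -> seq MX),
    game TC AC -> finite_game TC -> game TD AD -> finite_game TD ->
    game_embedding g TC AC TD AD -> game_embedding f TC AC TX AX ->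
    exists h : seq MD -> seq MX,
      game_embedding h TD AD TX AX /\ (forall t, TC t -> h (g t) = f t).

Definition countable_set (X : Type) (P : X -> Prop) : Prop :=
  exists c : X -> nat, forall x y, P x -> P y -> c x = c y -> x = y.

Definition countable_runs (M : Type) (P : (nat -> M) -> Prop) : Prop :=
  exists c : (nat -> M) -> nat, forall R R', P R -> P R' -> c R = c R' -> R =1 R'.

From Stdlib Require Import Classical ClassicalEpsilon FunctionalExtensionality.
From mathcomp Require Import all_boot.

Set Implicit Arguments.
Unset Strict Implicit.
Unset Printing Implicit Defensive.

(* Back and forth.  A finite partial isomorphism between finite subgames of G1
   and G2 can be enlarged so that its domain contains any given run of G1:
   adding the run keeps the domain a finite game, and injectivity of G2 extends
   the embedding along this inclusion.  Alternating with the symmetric step for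
   G2 along an enumeration of runs passing through every node and covering every
   winning run of both games, starting from the image of f, gives a chain whose
   union is a bijection of the trees.  A run of T1 that is winning, or whose
   image is winning, is then a run of a single finite stage, and each stage
   preserves winning runs. *)

Section Runs.
Variable M : Type.
Implicit Types (S T : seq M -> Prop) (A : (nat -> M) -> Prop) (R : nat -> M) (s t : seq M).

Lemma take_mkseq R k n : take k (mkseq R n) = mkseq R (minn k n).
Proof. by rewrite /mkseq -map_take take_iota. Qed.

Lemma mkseq_inj R R' : (forall n, mkseq R n = mkseq R' n) -> R = R'.
Proof.
move=> eqR; apply: functional_extensionality => i.
by have := congr1 (nth (R i) ^~ i) (eqR i.+1); rewrite !nth_mkseq.
Qed.

Lemma rcons_of_take s t : size s = (size t).+1 -> take (size t) s = t ->
  exists x, s = rcons t x.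
Proof.
case/lastP: s => [|s x] //; rewrite size_rcons => -[<-].
by rewrite -cats1 take_size_cat // => <-; exists x; rewrite cats1.
Qed.

Lemma chain_run (p : nat -> seq M) :
  (forall n, size (p n) = n) -> (forall n m, n <= m -> take n (p m) = p n) ->
  exists R, forall n, mkseq R n = p n.
Proof.
move=> size_p take_p; case: (p 1) (size_p 1) => [//|x0 _] _.
exists (fun n => nth x0 (p n.+1) n) => n; apply: (@eq_from_nth _ x0).
  by rewrite size_mkseq size_p.
move=> i; rewrite size_mkseq => lt_in.
by rewrite nth_mkseq // -(take_p i.+1 n lt_in) nth_take.
Qed.

Lemma game_tree_run_through T t : game_tree T -> T t ->
  exists2 R, Run T R & mkseq R (size t) = t.
Proof.
move=> [T_nil [T_take T_ext]] Tt; have [x0 _] := T_ext _ T_nil.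
have grow s : exists x, T s -> T (rcons s x).
  by case: (classic (T s)) => [/T_ext [x] | notTs]; [exists x | exists x0].
have [next nextP] := choice _ grow.
pose q n := iter n (fun s => rcons s (next s)) t.
have Tq n : T (q n) by elim: n => //= n; apply: nextP.
have size_q n : size (q n) = size t + n.
  by elim: n => [|n IH] /=; rewrite ?addn0 // size_rcons IH addnS.
have q_cat n j : exists ys, q (n + j) = q n ++ ys.
  elim: j => [|j [ys IH]]; first by exists [::]; rewrite addn0 cats0.
  by exists (rcons ys (next (q (n + j)))); rewrite addnS /= IH rcons_cat.
have [R eqR] : exists R, forall n, mkseq R n = take n (q n).
  apply: chain_run => [n | n m].
    by rewrite size_takel // size_q leq_addl.
  move=> /subnKC <-; have [ys ->] := q_cat n (m - n).
  by rewrite take_takel ?leq_addr // takel_cat // size_q leq_addl.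
exists R; first by move=> n; rewrite eqR; apply: T_take.
by have [ys e] := q_cat 0 (size t); rewrite eqR e take_size_cat.
Qed.

Definition restr A S R := A R /\ Run S R.

Lemma game_restr A S : game_tree S -> game S (restr A S).
Proof. by split=> // R []. Qed.

Lemma inclusion_embedding A S S' : (forall t, S t -> S' t) ->
  game_embedding id S (restr A S) S' (restr A S').
Proof.
move=> subS; split=> //.
- by move=> t St; split; [exact: subS | | ].
move=> R R' RS /mkseq_inj ->; split=> -[AR _] //.
by split=> // n; apply: subS.
Qed.

Definition with_run S R t := S t \/ exists n, t = mkseq R n.

Lemma with_run_tree S R : game_tree S -> game_tree (with_run S R).
Proof.
move=> [S_nil [S_take S_ext]]; split; first by left.
split=> [t k [St | [n ->]] | t [St | [n ->]]].
- by left; apply: S_take.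
- by right; exists (minn k n); rewrite take_mkseq.
- by have [x Stx] := S_ext _ St; exists x; left.
- by exists (R n); right; exists n.+1; rewrite mkseqS.
Qed.

Lemma with_run_finite S R : game_tree S -> finite_game S -> finite_game (with_run S R).
Proof.
move=> [_ [S_take _]] [n [e runs_e]].
exists n.+1, (fun i => oapp e R (unlift ord_max i)) => R0 R0run.
case: (classic (Run S R0)) => [/runs_e [i R0i] | /not_all_ex_not [n0 notS]].
  by exists (lift ord_max i); rewrite /= liftK.
exists ord_max; rewrite /= unlift_none /= => k; congr (_ k); apply: mkseq_inj => m.
have tail m' : n0 <= m' -> mkseq R0 m' = mkseq R m'.
  move=> le_n0m'; case: (R0run m') => [Sm' | [j ej]].
    by case: notS; have := S_take _ n0 Sm'; rewrite take_mkseq (minn_idPl le_n0m').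
  by rewrite ej -[in RHS](size_mkseq R0 m') ej size_mkseq.
have le_m := leq_maxl m n0.
by rewrite -(minn_idPl le_m) -!take_mkseq tail // leq_maxr.
Qed.

Lemma countable_game_enum T A :
  game T A -> countable_set T -> countable_runs A ->
  exists r : nat -> nat -> M, [/\ forall k, Run T (r k),
    forall t, T t -> exists k, mkseq (r k) (size t) = t &
    forall R, A R -> exists k, R = r k].
Proof.
move=> [T_tree A_T] [c c_inj] [a a_inj].
have [R0 R0T _] := game_tree_run_through T_tree (proj1 T_tree).
have node_run k : exists R, Run T R /\ forall t, T t -> c t = k -> mkseq R (size t) = t.
  case: (classic (exists2 t, T t & c t = k)) => [[t Tt ct] | none].
    have [R RT Rt] := game_tree_run_through T_tree Tt.
    by exists R; split=> // t' Tt' ct'; rewrite -(c_inj t t') // ct.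
  by exists R0; split=> // t Tt ct; case: none; exists t.
have win_run k : exists R, Run T R /\ forall R', A R' -> a R' = k -> R' = R.
  case: (classic (exists2 R, A R & a R = k)) => [[R AR aR] | none].
    exists R; split=> [|R' AR' aR']; first exact: A_T.
    by apply/functional_extensionality/a_inj => //; congruence.
  by exists R0; split=> // R AR aR; case: none; exists R.
have [[rn rnP] [ra raP]] := (choice _ node_run, choice _ win_run).
exists (fun k => if odd k then ra k./2 else rn k./2); split.
- by move=> k; case: (odd k); [case: (raP k./2) | case: (rnP k./2)].
- by move=> t Tt; exists (c t).*2; rewrite odd_double doubleK; case: (rnP (c t)) => _; apply.
- move=> R AR; exists (a R).*2.+1; rewrite /= odd_double uphalf_double.
  by case: (raP (a R)) => _; apply.
Qed.

End Runs.

Lemma dependent_choice_nat (X : Type) (I : X -> Prop) (P : nat -> X -> X -> Prop) x0 :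
  I x0 -> (forall n x, I x -> exists2 y, I y & P n x y) ->
  exists s : nat -> X, [/\ s 0 = x0, forall n, I (s n) & forall n, P n (s n) (s n.+1)].
Proof.
move=> I_x0 step.
have total_step (nx : nat * X) : exists y, I nx.2 -> I y /\ P nx.1 nx.2 y.
  case: nx => n x; case: (classic (I x)) => [/(step n) [y Iy Pxy] | notIx].
    by exists y.
  by exists x.
have [g gP] := choice _ total_step.
pose s := nat_rect (fun _ => X) x0 (fun n x => g (n, x)).
have I_s n : I (s n) by elim: n => //= n /(gP (n, _)) [].
by exists s; split=> // n; have [] := gP (n, s n) (I_s n).
Qed.

(* Primitive projections make [inv_iso (inv_iso p)] convertible to [p]. *)
#[projections(primitive)]
Record partial_iso (M1 M2 : Type) := PartialIso {
  dom : seq M1 -> Prop; cod : seq M2 -> Prop;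
  fwd : seq M1 -> seq M2; bwd : seq M2 -> seq M1 }.

Definition inv_iso (M1 M2 : Type) (p : partial_iso M1 M2) :=
  PartialIso (cod p) (dom p) (bwd p) (fwd p).

Section Extends.
Variables M1 M2 : Type.
Implicit Types p q r : partial_iso M1 M2.

Record extends p q : Prop := Extends {
  extends_dom : forall t, dom p t -> dom q t;
  extends_fwd : forall t, dom p t -> fwd q t = fwd p t }.

Lemma extends_refl p : extends p p.
Proof. by []. Qed.

Lemma extends_trans p q r : extends p q -> extends q r -> extends p r.
Proof.
move=> [pq_dom pq_fwd] [qr_dom qr_fwd].
by split=> [t /pq_dom/qr_dom // | t pt]; rewrite qr_fwd ?pq_fwd //; apply: pq_dom.
Qed.

End Extends.

Section PartialIsos.
Variables (M1 M2 : Type) (T1 : seq M1 -> Prop) (A1 : (nat -> M1) -> Prop)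
  (T2 : seq M2 -> Prop) (A2 : (nat -> M2) -> Prop).
Implicit Types p q : partial_iso M1 M2.

Record finite_iso p : Prop := FiniteIso {
  dom_sub : forall t, dom p t -> T1 t;
  cod_sub : forall u, cod p u -> T2 u;
  dom_tree : game_tree (dom p);
  cod_tree : game_tree (cod p);
  dom_finite : finite_game (dom p);
  cod_finite : finite_game (cod p);
  fwd_cod : forall t, dom p t -> cod p (fwd p t);
  bwd_dom : forall u, cod p u -> dom p (bwd p u);
  bwd_fwd : forall t, dom p t -> bwd p (fwd p t) = t;
  fwd_bwd : forall u, cod p u -> fwd p (bwd p u) = u;
  fwd_chrono : chronological (fwd p) (dom p) T2;
  bwd_chrono : chronological (bwd p) (cod p) T1;
  fwd_win : forall R R', Run (dom p) R -> induced (fwd p) R R' -> (A2 R' <-> A1 R);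
  bwd_win : forall R' R, Run (cod p) R' -> induced (bwd p) R' R -> (A1 R <-> A2 R') }.

Lemma finite_iso_embedding p :
  finite_iso p -> game_embedding (fwd p) (dom p) (restr A1 (dom p)) T2 A2.
Proof.
move=> iso_p; split; first exact: fwd_chrono iso_p.
  by move=> s t ps pt e; rewrite -(bwd_fwd iso_p ps) e (bwd_fwd iso_p pt).
by move=> R R' Rp ind; rewrite (fwd_win iso_p Rp ind); split=> [|[]].
Qed.

Lemma extends_inv p q :
  finite_iso p -> finite_iso q -> extends p q -> extends (inv_iso p) (inv_iso q).
Proof.
move=> iso_p iso_q [pq_dom pq_fwd].
have fwd_q u : cod p u -> fwd q (bwd p u) = u.
  by move=> pu; rewrite pq_fwd ?(fwd_bwd iso_p) //; apply: (bwd_dom iso_p).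
split=> u pu /=.
  by rewrite -(fwd_q u pu); apply/(fwd_cod iso_q)/pq_dom/(bwd_dom iso_p).
by rewrite -{1}(fwd_q u pu) (bwd_fwd iso_q) //; apply/pq_dom/(bwd_dom iso_p).
Qed.

Section Image.
Variables (S : seq M1 -> Prop) (h : seq M1 -> seq M2).
Hypotheses (S_tree : game_tree S) (h_chrono : chronological h S T2)
  (h_inj : forall s t, S s -> S t -> h s = h t -> s = t).

Let S_take : forall t k, S t -> S (take k t) := proj1 (proj2 S_tree).

Definition image u := exists2 t, S t & h t = u.

Definition image_inv u := epsilon (inhabits [::]) (fun t => S t /\ h t = u).

Lemma image_invP u : image u -> S (image_inv u) /\ h (image_inv u) = u.
Proof.
case=> t St htu; apply: (epsilon_spec _ (fun t => S t /\ h t = u)).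
by exists t.
Qed.

Lemma image_invK t : S t -> image_inv (h t) = t.
Proof.
move=> St; have [|S_inv h_inv] := @image_invP (h t); first by exists t.
exact: h_inj.
Qed.

Lemma image_tree : game_tree image.
Proof.
case: S_tree => S_nil [_ S_ext].
split; first by exists [::]; last by have [_ /size0nil] := h_chrono S_nil.
split=> [u k [t St <-] | u [t St <-]].
  by exists (take k t); [apply: S_take | have [_ _ ->] := h_chrono St].
have [x Stx] := S_ext _ St; have [_ size_ht _] := h_chrono St.
have [_ + take_htx] := h_chrono Stx; rewrite size_rcons -size_ht => size_htx.
have [|y hy] := rcons_of_take size_htx; first by rewrite -take_htx -cats1 take_size_cat.
by exists y; rewrite -hy; exists (rcons t x).
Qed.

Lemma image_run R' : Run image R' -> exists2 R, Run S R & induced h R R'.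
Proof.
move=> R'img.
have pick n : exists t, S t /\ h t = mkseq R' n by case: (R'img n) => t; exists t.
have [p pP] := choice _ pick.
have size_p n : size (p n) = n.
  by have [Sp hp] := pP n; have [_ <- _] := h_chrono Sp; rewrite hp size_mkseq.
have [R eqR] : exists R, forall n, mkseq R n = p n.
  apply: chain_run => // n m le_nm; have [Sm hm] := pP m; have [Sn hn] := pP n.
  apply: h_inj => //; first exact: S_take.
  by have [_ _ ->] := h_chrono Sm; rewrite hm hn take_mkseq (minn_idPl le_nm).
by exists R => n; rewrite eqR; case: (pP n).
Qed.

Lemma image_finite : finite_game S -> finite_game image.
Proof.
move=> [n [e runs_e]].
have [y0 _] : exists y : M2, True.
  case: S_tree => S_nil [_ S_ext]; have [x Sx] := S_ext _ S_nil.
  by have [_ + _] := h_chrono Sx; case: (h (rcons [::] x)) => // y; exists y.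
exists n, (fun i k => nth y0 (h (mkseq (e i) k.+1)) k) => R' /image_run [R RS ind].
have [i Ri] := runs_e R RS; exists i => k.
by rewrite -(eq_mkseq Ri) -ind nth_mkseq.
Qed.

Lemma image_iso :
  (forall t, S t -> T1 t) -> finite_game S ->
  (forall R R', Run S R -> induced h R R' -> (A2 R' <-> A1 R)) ->
  finite_iso (PartialIso S image h image_inv).
Proof.
move=> S_T1 S_finite h_win; split=> //=.
- by move=> u [t St <-]; case: (h_chrono St).
- exact: image_tree.
- exact: image_finite.
- by move=> t St; exists t.
- by move=> u /image_invP [].
- exact: image_invK.
- by move=> u /image_invP [].
- move=> u [t St <-]; rewrite image_invK //; have [_ <- take_ht] := h_chrono St.
  split=> // [|k]; first exact: S_T1.
  by rewrite -take_ht image_invK //; apply: S_take.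
move=> R' R R'img ind.
have RS : Run S R by move=> n; rewrite ind; case: (image_invP (R'img n)).
have ind' : induced h R R' by move=> n; rewrite ind; case: (image_invP (R'img n)).
exact: iff_sym (h_win _ _ RS ind').
Qed.

End Image.

Lemma finite_iso_forth p R :
  injective_finite T2 A2 -> finite_iso p -> Run T1 R ->
  exists q, [/\ finite_iso q, extends p q & Run (dom q) R].
Proof.
move=> inj2 iso_p RT1; set S := with_run (dom p) R.
have S_tree : game_tree S := with_run_tree R (dom_tree iso_p).
have S_finite : finite_game S := with_run_finite R (dom_tree iso_p) (dom_finite iso_p).
have dom_S t : dom p t -> S t by left.
have [h [[h_chrono h_inj h_win] h_fwd]] := inj2 _ _ _ _ _ _ _ _
  (game_restr A1 (dom_tree iso_p)) (dom_finite iso_p) (game_restr A1 S_tree) S_finite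
  (inclusion_embedding A1 dom_S) (finite_iso_embedding iso_p).
exists (PartialIso S (image S h) h (image_inv S h)); split.
- apply: image_iso => // [t [/(dom_sub iso_p) | [n ->]] // | R0 R0' R0S ind].
  by rewrite h_win //; split=> [[]|].
- by split=> // t /h_fwd.
- by move=> n; right; exists n.
Qed.

End PartialIsos.

Lemma finite_iso_inv (M1 M2 : Type) (T1 : seq M1 -> Prop) (A1 : (nat -> M1) -> Prop)
    (T2 : seq M2 -> Prop) (A2 : (nat -> M2) -> Prop) (p : partial_iso M1 M2) :
  finite_iso T1 A1 T2 A2 p -> finite_iso T2 A2 T1 A1 (inv_iso p).
Proof. by case; split. Qed.

Section Chain.
Variables (M1 M2 : Type) (T1 : seq M1 -> Prop) (A1 : (nat -> M1) -> Prop)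
  (T2 : seq M2 -> Prop) (A2 : (nat -> M2) -> Prop).

Lemma finite_iso_back_and_forth (p : partial_iso M1 M2) R1 R2 :
  injective_finite T1 A1 -> injective_finite T2 A2 ->
  finite_iso T1 A1 T2 A2 p -> Run T1 R1 -> Run T2 R2 ->
  exists q, [/\ finite_iso T1 A1 T2 A2 q, extends p q, Run (dom q) R1 & Run (cod q) R2].
Proof.
move=> inj1 inj2 iso_p R1T1 R2T2.
have [q1 [iso_q1 p_q1 R1q1]] := finite_iso_forth inj2 iso_p R1T1.
have [q2 [iso_q2 q1_q2 R2q2]] := finite_iso_forth inj1 (finite_iso_inv iso_q1) R2T2.
have q1_q2' : extends q1 (inv_iso q2) := extends_inv (finite_iso_inv iso_q1) iso_q2 q1_q2.
exists (inv_iso q2); split=> //; first exact: finite_iso_inv.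
  exact: extends_trans p_q1 q1_q2'.
by move=> n; apply/(extends_dom q1_q2').
Qed.

Record exhausting_chain (s : nat -> partial_iso M1 M2) : Prop := ExhaustingChain {
  chain_iso : forall n, finite_iso T1 A1 T2 A2 (s n);
  chain_extends : forall n, extends (s n) (s n.+1);
  chain_dom_cover : forall t, T1 t -> exists n, dom (s n) t;
  chain_cod_cover : forall u, T2 u -> exists n, cod (s n) u;
  chain_dom_win : forall R, A1 R -> exists n, Run (dom (s n)) R;
  chain_cod_win : forall R, A2 R -> exists n, Run (cod (s n)) R }.

Lemma exhausting_chain_exists (p : partial_iso M1 M2) :
  game T1 A1 -> game T2 A2 -> countable_set T1 -> countable_set T2 ->
  countable_runs A1 -> countable_runs A2 -> injective_finite T1 A1 -> injective_finite T2 A2 ->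
  finite_iso T1 A1 T2 A2 p ->
  exists2 s, s 0 = p & exhausting_chain s.
Proof.
move=> g1 g2 cT1 cT2 cA1 cA2 inj1 inj2 iso_p.
have [r1 [r1T1 r1_nodes r1_wins]] := countable_game_enum g1 cT1 cA1.
have [r2 [r2T2 r2_nodes r2_wins]] := countable_game_enum g2 cT2 cA2.
have step n x : finite_iso T1 A1 T2 A2 x -> exists2 y, finite_iso T1 A1 T2 A2 y &
    [/\ extends x y, Run (dom y) (r1 n) & Run (cod y) (r2 n)].
  move=> iso_x.
  have [y [? ? ? ?]] := finite_iso_back_and_forth inj1 inj2 iso_x (r1T1 n) (r2T2 n).
  by exists y.
have [s [s0 iso_s step_s]] := dependent_choice_nat iso_p step.
exists s => //; split=> // [n | t /r1_nodes [k <-] | u /r2_nodes [k <-] | R /r1_wins [k ->]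
  | R /r2_wins [k ->]]; first by case: (step_s n).
all: by exists k.+1; case: (step_s k).
Qed.

Section Limit.
Variable s : nat -> partial_iso M1 M2.
Hypothesis s_chain : exhausting_chain s.

Let iso_s := chain_iso s_chain.

Lemma chain_extends_le n m : n <= m -> extends (s n) (s m).
Proof.
move/subnK <-; elim: (m - n) => [|d IH]; first exact: extends_refl.
by rewrite addSn; apply: extends_trans IH (chain_extends s_chain _).
Qed.

Lemma chain_bwd_le n m u : n <= m -> cod (s n) u -> bwd (s m) u = bwd (s n) u.
Proof.
move=> /chain_extends_le le_nm u_n.
exact: extends_fwd (extends_inv (iso_s n) (iso_s m) le_nm) u u_n.
Qed.

Definition limit_level t := epsilon (inhabits 0) (fun n => dom (s n) t).

Definition limit_map t := fwd (s (limit_level t)) t.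

Lemma dom_limit_level t : T1 t -> dom (s (limit_level t)) t.
Proof. by move=> /(chain_dom_cover s_chain); apply: epsilon_spec. Qed.

Lemma limit_mapE n t : dom (s n) t -> limit_map t = fwd (s n) t.
Proof.
move=> t_n; have t_l := dom_limit_level (dom_sub (iso_s n) t_n).
rewrite /limit_map -(extends_fwd (chain_extends_le (leq_maxr n _)) t_l).
by rewrite (extends_fwd (chain_extends_le (leq_maxl n _)) t_n).
Qed.

Lemma limit_chronological : chronological limit_map T1 T2.
Proof.
move=> t /dom_limit_level t_l; have [T2t size_t take_t] := fwd_chrono (iso_s _) t_l.
split=> [||k]; rewrite ?(limit_mapE t_l) //.
have [_ [dom_take _]] := dom_tree (iso_s (limit_level t)).
by rewrite -take_t (limit_mapE (dom_take _ k t_l)).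
Qed.

Lemma limit_injective t t' : T1 t -> T1 t' -> limit_map t = limit_map t' -> t = t'.
Proof.
move=> /dom_limit_level t_l /dom_limit_level t'_l.
set N := maxn (limit_level t) (limit_level t').
have t_N := extends_dom (chain_extends_le (leq_maxl _ _ : _ <= N)) t_l.
have t'_N := extends_dom (chain_extends_le (leq_maxr _ _ : _ <= N)) t'_l.
rewrite (limit_mapE t_N) (limit_mapE t'_N) => e.
by rewrite -(bwd_fwd (iso_s N) t_N) e (bwd_fwd (iso_s N) t'_N).
Qed.

Lemma limit_surjective u : T2 u -> exists2 t, T1 t & limit_map t = u.
Proof.
move=> /(chain_cod_cover s_chain) [n u_n]; have t_n := bwd_dom (iso_s n) u_n.
exists (bwd (s n) u); first exact: (dom_sub (iso_s n)).
by rewrite (limit_mapE t_n) (fwd_bwd (iso_s n)).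
Qed.

Lemma limit_run_dom n R R' :
  Run T1 R -> induced limit_map R R' -> Run (cod (s n)) R' -> Run (dom (s n)) R.
Proof.
move=> RT1 ind R'_n k; set N := maxn n (limit_level (mkseq R k)).
have R_N := extends_dom (chain_extends_le (leq_maxr _ _ : _ <= N)) (dom_limit_level (RT1 k)).
have <- : bwd (s N) (mkseq R' k) = mkseq R k.
  by rewrite ind (limit_mapE R_N) (bwd_fwd (iso_s N)).
by rewrite (chain_bwd_le (leq_maxl _ _) (R'_n k)); apply: (bwd_dom (iso_s n)).
Qed.

Lemma limit_win R R' : Run T1 R -> induced limit_map R R' -> (A2 R' <-> A1 R).
Proof.
move=> RT1 ind.
have win_n n : Run (dom (s n)) R -> (A2 R' <-> A1 R).
  by move=> R_n; apply: (fwd_win (iso_s n) R_n) => k; rewrite ind (limit_mapE (R_n k)).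
case: (classic (A1 R)) => [/(chain_dom_win s_chain) [n /win_n] // | notA1].
case: (classic (A2 R')) => [/(chain_cod_win s_chain) [n R'_n] | notA2]; last by tauto.
exact: win_n n (limit_run_dom RT1 ind R'_n).
Qed.

End Limit.

End Chain.

Theorem mainTheorem5 (M1 M2 : Type)
  (T1 : seq M1 -> Prop) (A1 : (nat -> M1) -> Prop)
  (T2 : seq M2 -> Prop) (A2 : (nat -> M2) -> Prop) :
  game T1 A1 -> game T2 A2 ->
  countable_set T1 -> countable_set T2 ->
  countable_runs A1 -> countable_runs A2 ->
  injective_finite T1 A1 -> injective_finite T2 A2 ->
  forall (T : seq M1 -> Prop) (A : (nat -> M1) -> Prop),
    game T A -> finite_game T -> game_le T A T1 A1 ->
  forall f : seq M1 -> seq M2, game_embedding f T A T2 A2 ->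
  exists F : seq M1 -> seq M2,
    [/\ chronological F T1 T2,
        (forall s t, T1 s -> T1 t -> F s = F t -> s = t),
        (forall u, T2 u -> exists2 t, T1 t & F t = u),
        (forall t, T t -> F t = f t) &
        (forall R R', Run T1 R -> induced F R R' -> (A2 R' <-> A1 R))].
Proof.
move=> g1 g2 cT1 cT2 cA1 cA2 inj1 inj2 T A [T_tree _] T_finite [T_T1 A_A1] f
  [f_chrono f_inj f_win].
have iso_f : finite_iso T1 A1 T2 A2 (PartialIso T (image T f) f (image_inv T f)).
  apply: image_iso => // R R' RT ind; rewrite f_win // A_A1; tauto.
have [s s0 s_chain] := exhausting_chain_exists g1 g2 cT1 cT2 cA1 cA2 inj1 inj2 iso_f.
exists (limit_map s); split.
- exact: limit_chronological s_chain.
- exact: limit_injective s_chain.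
- exact: limit_surjective s_chain.
- by move=> t Tt; rewrite (limit_mapE s_chain (n := 0)) s0.
- exact: limit_win s_chain.
Qed.
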